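(* Let $\mathscr{H}$ be a finite-dimensional complex Hilbert space, let $A=\{a_k\}_{k=1}^{m}$ be a tight frame of $\mathscr{H}$ with frame bound $\alpha>0$ and $B=\{b_j\}_{j=1}^{n}$ a tight frame of $\mathscr{H}$ with frame bound $\beta>0$, and suppose $A$ and $B$ are $s$-order incompatible. Write $I=\{1,\dots,m\}$, $J=\{1,\dots,n\}$. For nonempty $S\subseteq I$, $T\subseteq J$ let $C_{S,T}$ be the optimal lower frame bound of the family $\{a_k\}_{k\in S^c}\cup\{b_j\}_{j\in T^c}$, i.e. the largest $C\ge 0$ with $C\|x\|^2\le\sum_{k\in S^c}|\langle x,a_k\rangle|^2+\sum_{j\in T^c}|\langle x,b_j\rangle|^2$ for all $x\in\mathscr{H}$, and let $C_s=\min\{C_{S,T}: S\subseteq I,\ T\subseteq J \text{ nonempty},\ |S|+|T|<s\}$ (with $C_s=+\infty$ if no such pair exists). Then $C_s>0$, and with $C=1/\min\{\alpha,\beta,C_s\}$, for all subsets $S\subseteq I$, $T\subseteq J$ with $|S|+|T|<s$ and all $x\in\mathscr{H}$, $$\|x\|^2\le C\Big(\sum_{k\in S^c}|\langle x,a_k\rangle|^2+\sum_{j\in T^c}|\langle x,b_j\rangle|^2\Big).$$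
   Context: A finite family $\{a_k\}_{k=1}^{m}\subset\mathscr{H}$ is a tight frame with frame bound $\alpha>0$ if $\sum_{k=1}^{m}|\langle x,a_k\rangle|^2=\alpha\|x\|^2$ for all $x\in\mathscr{H}$. The tight frames $A$ (bound $\alpha$) and $B$ (bound $\beta$) are called $s$-order incompatible, for an integer $s$, if: (1) for all nonempty $S\subseteq I$, $T\subseteq J$ with $|S|+|T|<s$ and every nonzero $x\in\mathscr{H}$, the two equalities $\sum_{k\in S}|\langle x,a_k\rangle|^2=\alpha\|x\|^2$ and $\sum_{j\in T}|\langle x,b_j\rangle|^2=\beta\|x\|^2$ do not both hold; and (2) there exist nonempty $S\subseteq I$, $T\subseteq J$ with $|S|+|T|=s$ and a nonzero $x\in\mathscr{H}$ for which both equalities hold. $S^c=I\setminus S$, $T^c=J\setminus T$. *)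

From HB Require Import structures.
From mathcomp Require Import all_boot all_order all_algebra.
From mathcomp Require Import complex.
From mathcomp Require Import boolp classical_sets reals constructive_ereal.

Set Implicit Arguments.
Unset Strict Implicit.
Unset Printing Implicit Defensive.

Import Order.TTheory GRing.Theory Num.Theory.
Local Open Scope ring_scope.

Section FrameDefs.
Variable R : realType.
Variable d : nat.

Definition vec := 'I_d -> R[i].

Definition inner (x y : vec) : R[i] := \sum_(i < d) x i * conjc (y i).

Definition sqmod (z : R[i]) : R := let: Complex a b := z in a ^+ 2 + b ^+ 2.
Definition sqnorm (x : vec) : R := \sum_(i < d) sqmod (x i).

Definition fsum (m : nat) (a : 'I_m -> vec) (S : {set 'I_m}) (x : vec) : R :=
  \sum_(k in S) sqmod (inner x (a k)).

Definition tight_frame (m : nat) (a : 'I_m -> vec) (alpha : R) : Prop :=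
  0 < alpha /\ forall x : vec, \sum_(k < m) sqmod (inner x (a k)) = alpha * sqnorm x.

Definition s_order_incompatible (m n : nat) (a : 'I_m -> vec) (b : 'I_n -> vec)
    (alpha beta : R) (s : nat) : Prop :=
  (forall (S : {set 'I_m}) (T : {set 'I_n}) (x : vec),
      S != finset.set0 -> T != finset.set0 -> (#|S| + #|T| < s)%N -> x <> (fun _ => 0) ->
      ~ (fsum a S x = alpha * sqnorm x /\ fsum b T x = beta * sqnorm x)) /\
  (exists (S : {set 'I_m}) (T : {set 'I_n}) (x : vec),
      [/\ S != finset.set0, T != finset.set0, (#|S| + #|T|)%N = s & x <> (fun _ => 0)] /\
      (fsum a S x = alpha * sqnorm x /\ fsum b T x = beta * sqnorm x)).

Definition compl_sum (m n : nat) (a : 'I_m -> vec) (b : 'I_n -> vec)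
    (S : {set 'I_m}) (T : {set 'I_n}) (x : vec) : R :=
  fsum a (~: S) x + fsum b (~: T) x.

Definition opt_lower_bound (m n : nat) (a : 'I_m -> vec) (b : 'I_n -> vec)
    (S : {set 'I_m}) (T : {set 'I_n}) : R :=
  sup [set c : R | 0 <= c /\ forall x : vec, c * sqnorm x <= compl_sum a b S T x].

Definition C_s (m n : nat) (a : 'I_m -> vec) (b : 'I_n -> vec) (s : nat) : \bar R :=
  \big[Order.min/+oo%E]_(S : {set 'I_m} | S != finset.set0)
    \big[Order.min/+oo%E]_(T : {set 'I_n} | (T != finset.set0) && (#|S| + #|T| < s)%N)
      (opt_lower_bound a b S T)%:E.

End FrameDefs.

From HB Require Import structures.
From mathcomp Require Import all_boot all_order all_algebra.
From mathcomp Require Import complex sesquilinear spectral.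
From mathcomp Require Import boolp classical_sets reals constructive_ereal.

Set Implicit Arguments.
Unset Strict Implicit.
Unset Printing Implicit Defensive.

Import Order.TTheory GRing.Theory Num.Theory.
Local Open Scope ring_scope.

(* In finite dimension, a family whose analysis operator x |-> (<x, v_k>)_k is
   injective has a positive lower frame bound: if W is a right inverse of the
   analysis matrix M, then x = (x M) W and Cauchy-Schwarz bounds ||x||^2 by a
   constant times ||x M||^2. For nonempty S, T with |S| + |T| < s the family
   {a_k}_(k in S^c) u {b_j}_(j in T^c) is such a family: a vector annihilated by
   it attains both tight frame bounds on S and on T, which s-order
   incompatibility forbids. Hence every C_(S,T) is positive and so is their
   finite minimum C_s, while for S or T empty the complementary sum contains a
   whole tight frame and is bounded below by alpha or beta. *)

Local Notation "''[' u ]" := (dotmx u u).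

Section DotmxLowerBound.
Variable C : numClosedFieldType.

Lemma dotmx_sqrE n (u : 'rV[C]_n) : '[u] = \sum_i `|u 0 i| ^+ 2.
Proof. by rewrite dotmxE mxE; apply: eq_bigr => i _; rewrite !mxE normCK. Qed.

Lemma dotmx_mulmx_le p q (y : 'rV[C]_p) (W : 'M[C]_(p, q)) :
  '[y *m W] <= '[y] * \sum_i \sum_k `|W k i| ^+ 2.
Proof.
pose w i : 'rV[C]_p := \row_k (W k i)^*.
have yWE i : (y *m W) 0 i = dotmx y (w i).
  by rewrite dotmxE !mxE; apply: eq_bigr => k _; rewrite !mxE conjCK.
have wE i : '[w i] = \sum_k `|W k i| ^+ 2.
  by rewrite dotmx_sqrE; apply: eq_bigr => k _; rewrite mxE norm_conjC.
rewrite dotmx_sqrE mulr_sumr; apply: ler_sum => i _.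
by rewrite yWE -wE (CauchySchwarz (@dotmx C p)).
Qed.

Lemma row_free_dotmx_lower_bound p q (M : 'M[C]_(p, q)) :
  row_free M -> exists2 c : C, 0 < c & forall u, c * '[u] <= '[u *m M].
Proof.
case/row_freeP => W MW.
pose K := \sum_i \sum_k `|W k i| ^+ 2.
have K_ge0 : 0 <= K by do 2!apply: sumr_ge0 => ? _; exact: exprn_ge0.
have K1_gt0 : 0 < 1 + K by rewrite ltr_pwDl.
exists (1 + K)^-1; first by rewrite invr_gt0.
move=> u; rewrite ler_pdivrMl // mulrDl mul1r.
rewrite -[in X in X <= _](mulmx1 u) -MW mulmxA.
by rewrite (le_trans (dotmx_mulmx_le _ _)) // mulrC lerDr dnorm_ge0.
Qed.
End DotmxLowerBound.


Section ComplexVectors.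
Variable R : realType.

Lemma sqmodE (z : R[i]) : (sqmod z)%:C%C = `|z| ^+ 2.
Proof. by case: z => a b; rewrite -add_Re2_Im2. Qed.

Lemma sqmod_ge0 (z : R[i]) : 0 <= sqmod z.
Proof. by have := exprn_ge0 2 (normr_ge0 z); rewrite -sqmodE ler0c. Qed.

Lemma sqmod_eq0 (z : R[i]) : (sqmod z == 0) = (z == 0).
Proof.
apply/eqP/eqP => [z0|->]; last by rewrite /= expr0n /= addr0.
by apply/eqP; rewrite -normr_eq0 -sqrf_eq0 -sqmodE z0.
Qed.

Lemma dotmx_sqmodE n (u : 'rV[R[i]]_n) : '[u] = (\sum_i sqmod (u 0 i))%:C%C.
Proof.
rewrite dotmx_sqrE; under eq_bigr do rewrite -sqmodE.
by rewrite rmorph_sum.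
Qed.

Variable d : nat.

Definition rowv (x : vec R d) : 'rV[R[i]]_d := \row_i x i.

Definition analysis_mx N (v : 'I_N -> vec R d) : 'M[R[i]]_(d, N) :=
  \matrix_(i, k) (v k i)^*.

Lemma sqnormE (x : vec R d) : (sqnorm x)%:C%C = '[rowv x].
Proof.
by rewrite dotmx_sqmodE; congr (_%:C)%C; apply: eq_bigr => i _; rewrite mxE.
Qed.

Lemma analysis_sumE N (v : 'I_N -> vec R d) x :
  (\sum_k sqmod (inner x (v k)))%:C%C = '[rowv x *m analysis_mx v].
Proof.
rewrite dotmx_sqmodE; congr (_%:C)%C; apply: eq_bigr => k _; congr sqmod.
by rewrite mxE; apply: eq_bigr => i _; rewrite !mxE.
Qed.

Lemma frame_lower_bound (I : finType) (K : {pred I}) (v : I -> vec R d) :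
  (forall x, \sum_(k in K) sqmod (inner x (v k)) = 0 -> x = (fun _ => 0)) ->
  exists2 c : R, 0 < c &
    forall x, c * sqnorm x <= \sum_(k in K) sqmod (inner x (v k)).
Proof.
move=> spanning; pose w := v \o @enum_val I (mem K).
have sumE x : \sum_(k in K) sqmod (inner x (v k)) = \sum_k sqmod (inner x (w k)).
  exact: big_enum_val.
have [|c c_gt0 c_lb] := @row_free_dotmx_lower_bound _ _ _ (analysis_mx w).
  apply/inj_row_free => u uM0.
  have uE : u = rowv (fun i => u 0 i) by apply/rowP => i; rewrite mxE.
  have /spanning u0 : \sum_(k in K) sqmod (inner (fun i => u 0 i) (v k)) = 0.
    apply/complexI; rewrite sumE analysis_sumE -uE uM0.
    by apply/eqP; rewrite dnorm_eq0.
  by apply/rowP => i; have := congr1 (fun f => f i) u0; rewrite !mxE.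
move: c_gt0; rewrite ltcE /= => /andP[/eqP Im_c Re_c_gt0].
have cE : c = (complex.Re c)%:C%C by case: c Im_c {c_lb Re_c_gt0} => ? ? /= ->.
exists (complex.Re c) => // x.
rewrite -lecR rmorphM /= sqnormE sumE analysis_sumE -cE.
exact: c_lb.
Qed.
End ComplexVectors.


Section VectorNorms.
Variables (R : realType) (d : nat).

Lemma sqnorm_ge0 (x : vec R d) : 0 <= sqnorm x.
Proof. by apply: sumr_ge0 => i _; exact: sqmod_ge0. Qed.

Lemma sqnorm_gt0 (x : vec R d) : x <> (fun _ => 0) -> 0 < sqnorm x.
Proof.
move=> x_neq0; rewrite lt_def sqnorm_ge0 andbT; apply: contra_notN x_neq0.
move/eqP/psumr_eq0P => x0; apply: funext => i; apply/eqP.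
by rewrite -sqmod_eq0 x0 // => j _; exact: sqmod_ge0.
Qed.

Lemma fsum_ge0 p (c : 'I_p -> vec R d) (S : {set 'I_p}) x : 0 <= fsum c S x.
Proof. by apply: sumr_ge0 => k _; exact: sqmod_ge0. Qed.

Lemma tight_frame_fsum_setC p (c : 'I_p -> vec R d) (gamma : R) S x :
  tight_frame c gamma -> fsum c S x + fsum c (~: S) x = gamma * sqnorm x.
Proof.
case=> _ <-; rewrite /fsum [RHS](bigID (mem S)) /=; congr (_ + _).
by apply: eq_bigl => k; rewrite finset.in_setC.
Qed.

End VectorNorms.

Section OptimalLowerBound.
Variables (R : realType) (V : Type) (N F : V -> R).
Hypotheses (N_ge0 : forall x, 0 <= N x) (F_ge0 : forall x, 0 <= F x).
Hypothesis N_nontrivial : exists x, 0 < N x.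

Let E := [set c : R | 0 <= c /\ forall x, c * N x <= F x]%classic.

Lemma has_sup_lower_bounds : has_sup E.
Proof.
split; first by exists 0; split=> // x; rewrite mul0r.
have [x0 N_x0] := N_nontrivial; exists (F x0 / N x0) => c [_ c_lb].
by rewrite ler_pdivlMr.
Qed.

Lemma lower_bound_le_sup c : E c -> c <= sup E.
Proof. exact/sup_upper_bound/has_sup_lower_bounds. Qed.

Lemma sup_lower_bound x : sup E * N x <= F x.
Proof.
have [N_x0|N_x_neq0] := eqVneq (N x) 0; first by rewrite N_x0 mulr0.
have N_x_gt0 : 0 < N x by rewrite lt_def N_x_neq0 N_ge0.
rewrite -ler_pdivlMr //; apply: ge_sup; first by exists 0; split=> // y; rewrite mul0r.
by move=> c [_ c_lb]; rewrite ler_pdivlMr.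
Qed.

End OptimalLowerBound.

Lemma fine_min_EFin (R : realType) (r : R) (e : \bar R) : 0 < r -> (0 < e)%E ->
  let mu := fine (Order.min r%:E e) in [/\ 0 < mu, mu <= r & (mu%:E <= e)%E].
Proof.
case: e => [c| |] // r_gt0; rewrite ?lte_fin => c_gt0 /=.
  by rewrite -EFin_min /= lee_fin lt_min r_gt0 c_gt0 !ge_min !lexx orbT.
by rewrite miney lexx leey.
Qed.

Section IncompatibleFrames.
Variables (R : realType) (d m n : nat).
Variables (a : 'I_m -> vec R d) (b : 'I_n -> vec R d).

Definition joint_family (k : 'I_m + 'I_n) : vec R d :=
  match k with inl i => a i | inr j => b j end.

Definition compl_index (S : {set 'I_m}) (T : {set 'I_n}) : pred ('I_m + 'I_n) :=
  fun k => match k with inl i => i \notin S | inr j => j \notin T end.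

Lemma compl_sumE S T x :
  compl_sum a b S T x = \sum_(k in compl_index S T) sqmod (inner x (joint_family k)).
Proof.
rewrite big_sumType /compl_sum /fsum.
by congr (_ + _); apply: eq_bigl => k; rewrite finset.in_setC.
Qed.

Lemma compl_sum_ge0 S T x : 0 <= compl_sum a b S T x.
Proof. exact: addr_ge0 (fsum_ge0 _ _ _) (fsum_ge0 _ _ _). Qed.

Lemma opt_lower_boundP S T x :
  opt_lower_bound a b S T * sqnorm x <= compl_sum a b S T x.
Proof. by apply: sup_lower_bound => y; [exact: sqnorm_ge0 | exact: compl_sum_ge0]. Qed.

Variables (alpha beta : R) (s : nat).
Hypotheses (a_tight : tight_frame a alpha) (b_tight : tight_frame b beta).
Hypothesis ab_incompatible : s_order_incompatible a b alpha beta s.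

Lemma compl_sum_set0l T x : alpha * sqnorm x <= compl_sum a b finset.set0 T x.
Proof.
rewrite -(tight_frame_fsum_setC finset.set0 x a_tight) {1}/fsum big_set0 add0r.
by rewrite lerDl fsum_ge0.
Qed.

Lemma compl_sum_set0r S x : beta * sqnorm x <= compl_sum a b S finset.set0 x.
Proof.
rewrite -(tight_frame_fsum_setC finset.set0 x b_tight) {1}/fsum big_set0 add0r.
by rewrite lerDr fsum_ge0.
Qed.

Lemma compl_sum_eq0 S T x :
  S != finset.set0 -> T != finset.set0 -> (#|S| + #|T| < s)%N ->
  compl_sum a b S T x = 0 -> x = (fun _ => 0).
Proof.
move=> S_neq0 T_neq0 ST_lt_s /eqP.
rewrite paddr_eq0 ?fsum_ge0 // => /andP[/eqP a0 /eqP b0].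
apply: contrapT => x_neq0; apply: (ab_incompatible.1 S T x) => //.
rewrite -(tight_frame_fsum_setC S x a_tight) -(tight_frame_fsum_setC T x b_tight).
by rewrite a0 b0 !addr0.
Qed.

Lemma exists_sqnorm_gt0 : exists x : vec R d, 0 < sqnorm x.
Proof.
by have [_ [S [T [x [[_ _ _ /sqnorm_gt0 x_gt0] _]]]]] := ab_incompatible; exists x.
Qed.

Lemma opt_lower_bound_gt0 S T :
  S != finset.set0 -> T != finset.set0 -> (#|S| + #|T| < s)%N ->
  0 < opt_lower_bound a b S T.
Proof.
move=> S_neq0 T_neq0 ST_lt_s.
have [|c c_gt0 c_lb] := @frame_lower_bound R d _ (compl_index S T) joint_family.
  by move=> x; rewrite -compl_sumE; exact: compl_sum_eq0.
apply: (lt_le_trans c_gt0); apply: lower_bound_le_sup.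
- exact: compl_sum_ge0.
- exact: exists_sqnorm_gt0.
- by split=> [|x]; [exact: ltW | rewrite compl_sumE].
Qed.

Lemma C_s_gt0 : (0 < C_s a b s)%E.
Proof.
apply/bigmin_gtP; split=> [|S S_neq0]; first exact: ltry.
apply/bigmin_gtP; split=> [|T /andP[T_neq0 ST_lt_s]]; first exact: ltry.
by rewrite lte_fin opt_lower_bound_gt0.
Qed.

Lemma C_s_le S T :
  S != finset.set0 -> T != finset.set0 -> (#|S| + #|T| < s)%N ->
  (C_s a b s <= (opt_lower_bound a b S T)%:E)%E.
Proof.
move=> S_neq0 T_neq0 ST_lt_s; apply: (bigmin_inf S) => //.
by apply: (bigmin_inf T) => //; rewrite T_neq0 ST_lt_s.
Qed.

Lemma compl_sum_lower_bound (mu : R) (S : {set 'I_m}) (T : {set 'I_n}) x :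
  mu <= alpha -> mu <= beta -> (mu%:E <= C_s a b s)%E -> (#|S| + #|T| < s)%N ->
  mu * sqnorm x <= compl_sum a b S T x.
Proof.
move=> mu_le_alpha mu_le_beta mu_le_Cs ST_lt_s.
have le_sqnorm c : mu <= c -> mu * sqnorm x <= c * sqnorm x.
  by move=> mu_le_c; rewrite ler_wpM2r ?sqnorm_ge0.
have [->|S_neq0] := eqVneq S finset.set0.
  exact: le_trans (le_sqnorm _ mu_le_alpha) (compl_sum_set0l _ _).
have [->|T_neq0] := eqVneq T finset.set0.
  exact: le_trans (le_sqnorm _ mu_le_beta) (compl_sum_set0r _ _).
apply: le_trans (le_sqnorm _ _) (opt_lower_boundP _ _ _).
by rewrite -lee_fin (le_trans mu_le_Cs) ?C_s_le.
Qed.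

End IncompatibleFrames.

Theorem mainTheorem4 (R : realType) (d m n : nat)
    (a : 'I_m -> vec R d) (b : 'I_n -> vec R d) (alpha beta : R) (s : nat) :
  tight_frame a alpha -> tight_frame b beta ->
  s_order_incompatible a b alpha beta s ->
  (0 < C_s a b s)%E /\
  let C := (fine (Order.min (Order.min alpha beta)%:E (C_s a b s)))^-1 in
  forall (S : {set 'I_m}) (T : {set 'I_n}) (x : vec R d),
    (#|S| + #|T| < s)%N ->
    sqnorm x <= C * compl_sum a b S T x.
Proof.
move=> a_tight b_tight ab_incompatible.
have Cs_gt0 := C_s_gt0 a_tight b_tight ab_incompatible.
split=> // C S T x ST_lt_s.
have min_gt0 : 0 < Order.min alpha beta by rewrite lt_min a_tight.1 b_tight.1.
have [mu_gt0 mu_le_min mu_le_Cs] := fine_min_EFin min_gt0 Cs_gt0.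
rewrite /C ler_pdivlMl //.
apply: (compl_sum_lower_bound a_tight b_tight x _ _ mu_le_Cs ST_lt_s).
- by rewrite (le_trans mu_le_min) // ge_min lexx.
- by rewrite (le_trans mu_le_min) // ge_min lexx orbT.
Qed.
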